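(* Let $r\ge 3$, $k\ge 2$, let $H=(V,\mathcal{E})$ be an $r$-minimal hypergraph and let $c$ be a $k$-coloring of $H$. For $v\in V$ define: $d_1^i(v)=|\{e\in\mathcal{E}(v): |c(e)|=2,\ c(e\setminus\{v\})=\{i\}\}|$ for each color $i\ne c(v)$, and $d_1(v)=\sum_{i\ne c(v)}d_1^i(v)$; $d_2(v)=|\{e\in\mathcal{E}(v): |c(e)|=1\}|$; $d_3(v)=|\{e\in\mathcal{E}(v): |c(e)|=2 \text{ and there is } v'\in e,\ v'\ne v, \text{ with } |c(e\setminus\{v'\})|=1\}|$; $d_4(v)=|\mathcal{E}(v)|-(d_1(v)+d_2(v)+d_3(v))$; and $D_j=\sum_{v\in V}d_j(v)$ for $j=1,2,3,4$. Then: (1) $D_1+D_2+D_3+D_4=\sum_{v\in V}|\mathcal{E}(v)|$; (2) $D_3\ge (r-1)D_1$; (3) if $c$ is a Nash equilibrium of the game with NM players, then $D_1\ge (k-1)D_2$.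
   Context: A hypergraph $H=(V,\mathcal{E})$ consists of a finite set $V$ of vertices and a finite set $\mathcal{E}$ of nonempty subsets of $V$; it is $r$-minimal if $|e|\ge r$ for all $e\in\mathcal{E}$. A $k$-coloring is a map $c:V\to[k]$; for $S\subseteq V$, $c(S)$ is the set of colors of vertices of $S$. $\mathcal{E}(v)=\{e\in\mathcal{E}: v\in e\}$. With NM (non-monochromatic seeking) players, $u_v(c)=|\{e\in\mathcal{E}(v): |c(e)|>1\}|$. A coloring $c$ is a Nash equilibrium if $u_v(c)\ge u_v(c_{-v},i)$ for all $v\in V$, $i\in[k]$, where $(c_{-v},i)$ is $c$ with the color of $v$ replaced by $i$. *)

From mathcomp Require Import all_boot.
Set Implicit Arguments. Unset Strict Implicit. Unset Printing Implicit Defensive.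

Section Hyper.
Variables (V : finType) (k : nat).

Definition hypergraph (E : {set {set V}}) : Prop := forall e, e \in E -> e != set0.

Definition r_minimal (r : nat) (E : {set {set V}}) : Prop := forall e, e \in E -> r <= #|e|.

Definition colors (c : V -> 'I_k) (S : {set V}) : {set 'I_k} := c @: S.

Definition edges_at (E : {set {set V}}) (v : V) : {set {set V}} := [set e in E | v \in e].

Variables (E : {set {set V}}) (c : V -> 'I_k).

Definition d1i (v : V) (i : 'I_k) : nat :=
  #|[set e in edges_at E v | (#|colors c e| == 2) && (colors c (e :\ v) == [set i])]|.

Definition d1 (v : V) : nat := \sum_(i < k | i != c v) d1i v i.

Definition d2 (v : V) : nat := #|[set e in edges_at E v | #|colors c e| == 1]|.

Definition d3 (v : V) : nat :=
  #|[set e in edges_at E v | (#|colors c e| == 2) &&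
      [exists v', (v' \in e) && (v' != v) && (#|colors c (e :\ v')| == 1)]]|.

(* natural-number subtraction; it never truncates when r >= 3 *)
Definition d4 (v : V) : nat := #|edges_at E v| - (d1 v + d2 v + d3 v).

Definition D1 := \sum_(v : V) d1 v.
Definition D2 := \sum_(v : V) d2 v.
Definition D3 := \sum_(v : V) d3 v.
Definition D4 := \sum_(v : V) d4 v.

End Hyper.

Definition recolor (V : finType) (k : nat) (c : V -> 'I_k) (v : V) (i : 'I_k) : V -> 'I_k :=
  fun w => if w == v then i else c w.

Definition util_NM (V : finType) (k : nat) (E : {set {set V}}) (c : V -> 'I_k) (v : V) : nat :=
  #|[set e in edges_at E v | 1 < #|colors c e|]|.

Definition nash_NM (V : finType) (k : nat) (E : {set {set V}}) (c : V -> 'I_k) : Prop :=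
  forall (v : V) (i : 'I_k), util_NM E (recolor c v i) v <= util_NM E c v.

From mathcomp Require Import all_boot zify.
Set Implicit Arguments. Unset Strict Implicit.

(* Every count is rewritten as a sum over incident pairs (v, e) of per-edge
   indicators, so all three claims reduce to statements about a single edge e
   with at least three vertices.  Call v "lonely" in e when e is 2-coloured and
   v is the only vertex of its colour; these are the pairs counted by d1.
   (1) A pair is counted by at most one of d1, d2, d3, so d4 does not truncate.
   (2) An edge has at most one lonely vertex, and if v is lonely then every
       other vertex w of e is counted by d3 with witness v' = v: r - 1 pairs.
   (3) Recolouring v with i turns a monochromatic edge into a 2-coloured one,
       and destroys no non-monochromatic edge unless v is lonely for i there;
       hence d2(v) <= d1^i(v) at a Nash equilibrium, and summing over the
       k - 1 colours i != c v gives the claim. *)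

Lemma card_sep_sum (T : finType) (A : {set T}) (P : pred T) :
  #|[set x in A | P x]| = \sum_(x in A) P x.
Proof.
rewrite -sum1_card big_mkcond [RHS]big_mkcond /=.
by apply: eq_bigr => x _; rewrite inE; case: (x \in A); case: (P x).
Qed.

Lemma card_ge3_avoid2 (T : finType) (A : {set T}) a b :
  3 <= #|A| -> exists2 u, u \in A & (u != a) && (u != b).
Proof.
move=> A3; have : 0 < #|A :\ a :\ b|.
  move: A3; rewrite (cardsD1 a A) (cardsD1 b (A :\ a)).
  by have := leq_b1 (a \in A); have := leq_b1 (b \in A :\ a); lia.
rewrite card_gt0 => /set0Pn[u]; rewrite !in_setD1 => /and3P[ub ua uA].
by exists u; rewrite ?ua ?ub.
Qed.

Lemma exchange_edges_at (V : finType) (E : {set {set V}}) (F : V -> {set V} -> nat) :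
  \sum_v \sum_(e in edges_at E v) F v e = \sum_(e in E) \sum_(v in e) F v e.
Proof.
rewrite (eq_bigr (fun v => \sum_e (if e \in edges_at E v then F v e else 0)));
  last by move=> v _; rewrite big_mkcond.
rewrite exchange_big [RHS]big_mkcond; apply: eq_bigr => e _.
case: (boolP (e \in E)) => eE.
  by rewrite [RHS]big_mkcond; apply: eq_bigr => v _; rewrite inE eE.
by apply: big1 => v _; rewrite inE (negbTE eE).
Qed.

Section EdgeColoring.
Variables (V : finType) (k : nat) (c : V -> 'I_k).
Implicit Types (e : {set V}) (v w : V) (i : 'I_k).

Lemma mem_colors e v : v \in e -> c v \in colors c e.
Proof. exact: imset_f. Qed.

Lemma colorsD1 e v : v \in e -> colors c e = c v |: colors c (e :\ v).
Proof. by move=> ve; rewrite /colors -imsetU1 setD1K. Qed.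

Lemma colors_recolor e v i : v \in e ->
  colors (recolor c v i) e = i |: colors c (e :\ v).
Proof.
move=> ve; rewrite /colors -{1}(setD1K ve) imsetU1 /recolor eqxx; congr (_ |: _).
by apply: eq_in_imset => w; rewrite in_setD1 => /andP[/negbTE ->].
Qed.

Definition lonely_for v i e : bool :=
  (#|colors c e| == 2) && (colors c (e :\ v) == [set i]).

Definition lonely v e : bool := [exists i, (i != c v) && lonely_for v i e].

Definition d3_edge v e : bool :=
  (#|colors c e| == 2) &&
  [exists v', (v' \in e) && (v' != v) && (#|colors c (e :\ v')| == 1)].

Lemma lonely_for_color v i e : lonely_for v i e -> forall w, w \in e -> w != v -> c w = i.
Proof.
case/andP=> _ /eqP hS w we wv.
by apply/set1P; rewrite -hS; apply: mem_colors; rewrite in_setD1 wv.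
Qed.

Lemma sum_lonely_for v e : \sum_(i < k | i != c v) lonely_for v i e = lonely v e.
Proof.
case: (boolP (lonely v e)) => [/existsP[i0 /andP[ni0 l0]] | nl].
  rewrite (bigD1 i0) //= l0 big1 // => i /andP[_ ni].
  apply/eqP; rewrite eqb0; apply: contra ni => /andP[_ /eqP hS].
  by move: l0 => /andP[_]; rewrite hS => /eqP/set1_inj->.
apply: big1 => i ni; apply/eqP; rewrite eqb0; apply: contra nl => li.
by apply/existsP; exists i; rewrite ni.
Qed.

Lemma lonely_unique e v w : 3 <= #|e| -> v \in e -> w \in e ->
  lonely v e -> lonely w e -> v = w.
Proof.
move=> e3 ve we /existsP[i /andP[ni li]] /existsP[j /andP[_ lj]].
apply/eqP/negPn/negP => vw.
have [u ue /andP[uv uw]] := card_ge3_avoid2 v w e3.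
have cw : c w = i by apply: (lonely_for_color li); rewrite // eq_sym.
have cv : c v = j by apply: (lonely_for_color lj).
by move: ni; rewrite cv -(lonely_for_color lj ue uw) (lonely_for_color li ue uv) eqxx.
Qed.

(* If v is lonely in e, then removing any other vertex v' leaves c v and the
   colour of a third vertex, so the witness of [d3_edge v e] cannot exist. *)
Lemma edge_classes_disjoint e v : 3 <= #|e| -> v \in e ->
  lonely v e + (#|colors c e| == 1) + d3_edge v e <= 1.
Proof.
move=> e3 ve; case: (boolP (lonely v e)) => [lv | _]; last first.
  by rewrite /d3_edge; case: #|colors c e| => [|[|[|n]]] //; case: existsP.
move: (lv) => /existsP[i /andP[ni /andP[/eqP c2 hS]]].
rewrite /d3_edge c2 /=; case: existsP => // [[v' /andP[/andP[v'e v'v] /eqP c1]]].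
have [u ue /andP[uv uv']] := card_ge3_avoid2 v v' e3.
have cu : c u = i by apply: (lonely_for_color (i := i) _ ue uv); rewrite /lonely_for c2.
suff : 1 < #|colors c (e :\ v')| by rewrite c1.
apply/card_gt1P; exists (c v), (c u); split; last by rewrite cu eq_sym.
- by apply: mem_colors; rewrite in_setD1 eq_sym v'v.
- by apply: mem_colors; rewrite in_setD1 uv'.
Qed.

Lemma lonely_edge_d3 e r : 3 <= r -> r <= #|e| ->
  (r - 1) * \sum_(v in e) lonely v e <= \sum_(v in e) d3_edge v e.
Proof.
move=> r3 re; have e3 : 3 <= #|e| := leq_trans r3 re.
case: (boolP [exists v0 in e, lonely v0 e]) => [/existsP[v0 /andP[v0e l0]] | nl];
  last first.
  rewrite big1 ?muln0 // => v ve; apply/eqP; rewrite eqb0.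
  by apply: contra nl => lv; apply/existsP; exists v; rewrite ve.
have -> : \sum_(v in e) lonely v e = 1.
  rewrite (bigD1 v0) //= l0 big1 // => v /andP[ve vv0].
  apply/eqP; rewrite eqb0; apply: contra vv0 => lv.
  by rewrite (lonely_unique e3 ve v0e lv l0).
rewrite muln1 -card_sep_sum; apply: leq_trans (_ : #|e :\ v0| <= _).
  by have := cardsD1 v0 e; rewrite v0e; lia.
apply: subset_leq_card; apply/subsetP => w; rewrite in_setD1 inE => /andP[wv0 we].
move: l0 => /existsP[i /andP[_ /andP[c2 /eqP hS]]].
rewrite we /d3_edge c2; apply/existsP; exists v0.
by rewrite v0e eq_sym wv0 hS cards1.
Qed.

Lemma recolor_edge_gain e v i : 3 <= #|e| -> v \in e -> i != c v ->
  (1 < #|colors c e|) + (#|colors c e| == 1) <=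
  (1 < #|colors (recolor c v i) e|) + lonely_for v i e.
Proof.
move=> e3 ve ni.
have : (1 < #|colors c e|) + (#|colors c e| == 1) <= 1.
  by case: #|colors c e| => [|[|n]].
move/leq_trans; apply; rewrite colors_recolor // /lonely_for.
set S := colors c (e :\ v).
case: (boolP (S == [set i])) => [/eqP hS | hS].
  by rewrite (colorsD1 ve) -/S hS setUid cards1 cards2 (eq_sym (c v)) ni.
have [w we /andP[wv _]] := card_ge3_avoid2 v v e3.
have S0 : S != set0.
  by apply/set0Pn; exists (c w); apply: mem_colors; rewrite in_setD1 wv.
have /subsetPn[j jS ji] : ~~ (S \subset [set i]) by rewrite subset1 negb_or hS S0.
rewrite andbF addn0 lt0b; apply/card_gt1P; exists i, j; rewrite setU11 setU1r //.
by split=> //; rewrite eq_sym; move: ji; rewrite inE.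
Qed.

Variable E : {set {set V}}.

Lemma d1_sum_edges v : d1 E c v = \sum_(e in edges_at E v) lonely v e.
Proof.
rewrite /d1 (eq_bigr (fun i => \sum_(e in edges_at E v) lonely_for v i e));
  last by move=> i _; rewrite /d1i card_sep_sum.
by rewrite exchange_big; apply: eq_bigr => e _; apply: sum_lonely_for.
Qed.

Lemma d3_sum_edges v : d3 E c v = \sum_(e in edges_at E v) d3_edge v e.
Proof. exact: card_sep_sum. Qed.

Hypothesis E3 : forall e, e \in E -> 3 <= #|e|.

Lemma d123_le_degree v : d1 E c v + d2 E c v + d3 E c v <= #|edges_at E v|.
Proof.
rewrite d1_sum_edges /d2 card_sep_sum d3_sum_edges -!big_split -sum1_card.
apply: leq_sum => e; rewrite inE => /andP[eE ve]; exact: edge_classes_disjoint (E3 eE) ve.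
Qed.

Lemma nash_d2_le_d1i v i : nash_NM E c -> i != c v -> d2 E c v <= d1i E c v i.
Proof.
move=> /(_ v i); rewrite /util_NM /d2 /d1i !card_sep_sum => nash ni.
rewrite -(leq_add2l (\sum_(e in edges_at E v) (1 < #|colors c e|))).
apply: leq_trans (_ : \sum_(e in edges_at E v)
  ((1 < #|colors (recolor c v i) e|) + lonely_for v i e) <= _).
  rewrite -big_split; apply: leq_sum => e; rewrite inE => /andP[eE ve].
  exact: recolor_edge_gain (E3 eE) ve ni.
by rewrite big_split leq_add2r.
Qed.

End EdgeColoring.

Theorem mainTheorem4 (V : finType) (r k : nat) (E : {set {set V}}) (c : V -> 'I_k) :
  3 <= r -> 2 <= k -> hypergraph E -> r_minimal r E ->
  [/\ D1 E c + D2 E c + D3 E c + D4 E c = \sum_(v : V) #|edges_at E v|,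
      (r - 1) * D1 E c <= D3 E c
    & nash_NM E c -> (k - 1) * D2 E c <= D1 E c].
Proof.
move=> r3 _ _ Er.
have E3 e : e \in E -> 3 <= #|e| by move=> eE; apply: leq_trans r3 (Er e eE).
split.
- rewrite /D1 /D2 /D3 /D4 -!big_split /=; apply: eq_bigr => v _.
  by rewrite /d4 subnKC // d123_le_degree.
- rewrite /D1 /D3 (eq_bigr _ (fun v _ => d1_sum_edges c E v)).
  rewrite (eq_bigr _ (fun v _ => d3_sum_edges c E v)) !exchange_edges_at big_distrr.
  by apply: leq_sum => e eE; apply: lonely_edge_d3 (Er e eE).
- move=> nash; rewrite /D1 /D2 big_distrr /=; apply: leq_sum => v _.
  have -> : (k - 1) * d2 E c v = \sum_(i < k | i != c v) d2 E c v.
    by rewrite sum_nat_const cardC1 card_ord subn1.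
  by apply: leq_sum => i ni; apply: nash_d2_le_d1i.
Qed.
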